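(* Let $n>k\ge1$, $\widetilde{\mathbf P}$ a $k\times(n-k)$ matrix over $\mathbb F_2$ with $r_{\mathbf P}=\mathrm{rank}(\widetilde{\mathbf P}^{\top})$, $\widetilde{\mathbf y}_{\mathrm P}\in\mathbb F_2^{\,n-k}$, and let $\mathcal C=\{[\mathbf x\ \ \mathbf x\widetilde{\mathbf P}]:\mathbf x\in\mathbb F_2^{\,k}\}\subseteq\mathbb F_2^{\,n}$ be the code generated by $[\mathbf I_k\ \ \widetilde{\mathbf P}]$. With $\mathbf E_{\mathbf P},\boldsymbol\Pi_{\mathbf P},\mathbf P_{\mathrm t},\boldsymbol\Pi_{\mathbf Q},\mathbf Q_{\mathrm t},\mathbf e_0$ as in the context, define for $\mathbf e^{\mathrm{pri}}\in\mathbb F_2^{\,r_{\mathbf P}}$ and $\mathbf t\in\mathbb F_2^{\,k-r_{\mathbf P}}$: $$\mathbf e=(\mathbf e^{\mathrm{pri}}\mathbf Q_{\mathrm t}^{\top}\oplus\mathbf e_0)\boldsymbol\Pi_{\mathbf Q}^{\top},\qquad \mathbf z_{\mathbf e}=(\mathbf e\oplus\widetilde{\mathbf y}_{\mathrm P})\mathbf E_{\mathbf P}^{\top},$$ $\mathbf x_{\mathbf e}$ equal to the first $k$ entries of $\mathbf z_{\mathbf e}$ if $k\le n-k$ and to $\mathbf z_{\mathbf e}$ padded with $2k-n$ trailing zeros if $k>n-k$, and $$\Phi(\mathbf e^{\mathrm{pri}},\mathbf t)=\big[(\mathbf x_{\mathbf e}\oplus\mathbf t\mathbf P_{\mathrm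 t}^{\top})\boldsymbol\Pi_{\mathbf P}^{\top}\ \ \ \widetilde{\mathbf y}_{\mathrm P}\oplus\mathbf e\big]\in\mathbb F_2^{\,n}.$$ Then $\Phi$ is a bijection from $\mathbb F_2^{\,r_{\mathbf P}}\times\mathbb F_2^{\,k-r_{\mathbf P}}$ onto $\mathcal C$. In particular the set of codeword estimates obtained from all valid TEPs and all extended choices is the whole code, of size $2^k$.
   Context: All vectors are row vectors over $\mathbb F_2$; $\oplus$ is addition over $\mathbb F_2$. $\mathbf E_{\mathbf P}$ is an invertible $(n-k)\times(n-k)$ matrix and $\boldsymbol\Pi_{\mathbf P}$ a $k\times k$ permutation matrix with $\mathbf E_{\mathbf P}\widetilde{\mathbf P}^{\top}\boldsymbol\Pi_{\mathbf P}=\begin{bmatrix}\mathbf I_{r_{\mathbf P}}&\mathbf R\\ \mathbf 0&\mathbf 0\end{bmatrix}$ with $\mathbf R$ of size $r_{\mathbf P}\times(k-r_{\mathbf P})$, and $\mathbf P_{\mathrm t}=\begin{bmatrix}\mathbf R\\ \mathbf I_{k-r_{\mathbf P}}\end{bmatrix}$. Let $r_{\mathbf Q}=n-k-r_{\mathbf P}$. If $r_{\mathbf P}<n-k$: $\mathbf Q$ is the matrix of the last $r_{\mathbf Q}$ rows of $\mathbf E_{\mathbf P}$; $\mathbf E_{\mathbf Q}$ is an invertible $r_{\mathbf Q}\times r_{\mathbf Q}$ matrix and $\boldsymbol\Pi_{\mathbf Q}$ an $(n-k)\times(n-k)$ permutation matrix with $\mathbf E_{\mathbf Q}\mathbf Q\boldsymbol\Pi_{\mathbf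 Q}=[\mathbf I_{r_{\mathbf Q}}\ \ \mathbf Q_{\mathrm r}]$; $\mathbf Q_{\mathrm t}=\begin{bmatrix}\mathbf Q_{\mathrm r}\\ \mathbf I_{r_{\mathbf P}}\end{bmatrix}$; $\mathbf e_0=[\,\widetilde{\mathbf y}_{\mathrm P}\mathbf Q^{\top}\mathbf E_{\mathbf Q}^{\top}\ \ \mathbf 0_{r_{\mathbf P}}\,]$. If $r_{\mathbf P}=n-k$: $\mathbf Q_{\mathrm t}=\boldsymbol\Pi_{\mathbf Q}=\mathbf I_{n-k}$ and $\mathbf e_0=\mathbf 0$. The vector $\mathbf e^{\mathrm{pri}}$ is called the primary TEP and $\mathbf t$ plays the role of the extended TEP. *)

(* Row vectors over F_2 = 'F_2; xor = +. *)
From HB Require Import structures.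
From mathcomp Require Import all_boot all_order all_fingroup all_algebra.
Set Implicit Arguments. Unset Strict Implicit. Unset Printing Implicit Defensive.
Import GRing.Theory.
Local Open Scope ring_scope.

Notation F2 := 'F_2.

Section Defs.
Variables (k m : nat) (P : 'M[F2]_(k, m)).

Definition rk : nat := \rank P^T.

Lemma rk_le_m : (rk <= m)%N. Proof. exact: rank_leq_row. Qed.
Lemma rk_le_k : (rk <= k)%N. Proof. exact: rank_leq_col. Qed.

Definition eqk : k = (rk + (k - rk))%N := esym (subnKC rk_le_k).
Definition eqm : m = (rk + (m - rk))%N := esym (subnKC rk_le_m).
Definition eqQ : ((m - rk) + rk)%N = m := subnK rk_le_m.

Definition topblock (R : 'M[F2]_(rk, k - rk)) : 'M[F2]_(m, k) :=
  castmx (esym eqm, esym eqk) (block_mx 1%:M R 0 0).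

Definition Pt (R : 'M[F2]_(rk, k - rk)) : 'M[F2]_(k, k - rk) :=
  castmx (esym eqk, erefl) (col_mx R 1%:M).

Definition Qmat (EP : 'M[F2]_m) : 'M[F2]_(m - rk, m) :=
  dsubmx (castmx (eqm, erefl) EP).

Definition qblock (Qr : 'M[F2]_(m - rk, rk)) : 'M[F2]_(m - rk, m) :=
  castmx (erefl, eqQ) (row_mx 1%:M Qr).

Definition Qt (Qr : 'M[F2]_(m - rk, rk)) : 'M[F2]_(m, rk) :=
  castmx (eqQ, erefl) (col_mx Qr 1%:M).

Definition e0 (y : 'rV[F2]_m) (EQ : 'M[F2]_(m - rk)) (EP : 'M[F2]_m) : 'rV[F2]_m :=
  castmx (erefl, eqQ) (row_mx (y *m (Qmat EP)^T *m EQ^T) 0).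

Definition err (EP : 'M[F2]_m) (EQ : 'M[F2]_(m - rk)) (PiQ : 'M[F2]_m)
  (Qr : 'M[F2]_(m - rk, rk)) (y : 'rV[F2]_m) (epri : 'rV[F2]_rk) : 'rV[F2]_m :=
  (epri *m (Qt Qr)^T + e0 y EQ EP) *m PiQ^T.

End Defs.

Definition trunc_pad (m k : nat) (z : 'rV[F2]_m) : 'rV[F2]_k :=
  \row_(j < k) \sum_(i < m) (if (i == j :> nat) then z 0 i else 0).

Section Phi.
Variables (n k : nat) (hn : (k + (n - k))%N = n) (P : 'M[F2]_(k, n - k)).
Variables (EP : 'M[F2]_(n - k)) (PiP : 'M[F2]_k) (R : 'M[F2]_(rk P, k - rk P)).
Variables (EQ : 'M[F2]_(n - k - rk P)) (PiQ : 'M[F2]_(n - k))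
          (Qr : 'M[F2]_(n - k - rk P, rk P)) (y : 'rV[F2]_(n - k)).

Definition Phi (p : 'rV[F2]_(rk P) * 'rV[F2]_(k - rk P)) : 'rV[F2]_n :=
  let e := err EP EQ PiQ Qr y p.1 in
  let z := (e + y) *m EP^T in
  let x := trunc_pad k z in
  castmx (erefl, hn) (row_mx ((x + p.2 *m (Pt R)^T) *m PiP^T) (y + e)).

Definition code : {set 'rV[F2]_n} :=
  [set castmx (erefl, hn) (row_mx x (x *m P)) | x : 'rV[F2]_k].

End Phi.

From HB Require Import structures.
From mathcomp Require Import all_boot all_order all_fingroup all_algebra.
Import GRing.Theory.
Local Open Scope ring_scope.

(* The parity part of Phi is y + e, and e_0 is chosen so that (y + e) Q^T = 0:
   z_e = (e + y) E_P^T then vanishes in its last r_Q entries, so its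
   truncation or padding x_e satisfies x_e [I R; 0 0]^T = z_e.  Since P_t
   spans the kernel of [I R; 0 0], the same holds for x_e + t P_t^T, and
   undoing E_P and Pi_P shows that the information part x of Phi satisfies
   x P = y + e, i.e. Phi lands in the code.  Phi is injective because Q_t^T
   and P_t^T contain identity blocks, and both sides have 2^k elements. *)

Lemma castmx_mul {R : pzSemiRingType} {a b c a' b' c'}
    (ea : a = a') (eb : b = b') (ec : c = c') (A : 'M[R]_(a, b)) (B : 'M[R]_(b, c)) :
  castmx (ea, ec) (A *m B) = castmx (ea, eb) A *m castmx (eb, ec) B.
Proof. by case: a' / ea; case: b' / eb; case: c' / ec; rewrite !castmx_id. Qed.

Lemma mul_perm_mx_tr (R : pzSemiRingType) n (A : 'M[R]_n) :
  is_perm_mx A -> A *m A^T = 1%:M.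
Proof. by move=> /is_perm_mxP [s ->]; rewrite tr_perm_mx -perm_mxM mulgV perm_mx1. Qed.

Lemma mul_tr_perm_mx (R : pzSemiRingType) n (A : 'M[R]_n) :
  is_perm_mx A -> A^T *m A = 1%:M.
Proof. by move=> /is_perm_mxP [s ->]; rewrite tr_perm_mx -perm_mxM mulVg perm_mx1. Qed.

Lemma mul_row_mx1_inj (R : pzRingType) a b c (e : (b + a)%N = c) (N : 'M[R]_(a, b)) :
  injective (fun u : 'rV[R]_a => u *m castmx (erefl, e) (row_mx N 1%:M)).
Proof.
move=> u v /=; rewrite -!(castmx_mul (erefl 1%N) (erefl a) e).
by move=> /(can_inj (castmxK _ _)); rewrite !mul_mx_row !mulmx1 => /eq_row_mx [].
Qed.

Lemma F2mx_addrr p q (A : 'M[F2]_(p, q)) : A + A = 0.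
Proof. by apply/matrixP => i j; rewrite !mxE (addrr_pchar2 (pchar_Fp _)). Qed.

Lemma trunc_pad_castmx {k m r k2 m2} (ek : k = (r + k2)%N) (em : m = (r + m2)%N)
    {z : 'rV[F2]_m} {a : 'rV[F2]_r} :
  castmx (erefl, em) z = row_mx a 0 -> castmx (erefl, ek) (trunc_pad k z) = row_mx a 0.
Proof.
subst k m; rewrite !castmx_id => ->.
apply/rowP => j; rewrite [LHS]mxE [RHS]mxE.
case: splitP => [j1 Hj | j2 Hj].
- rewrite (bigD1 (lshift m2 j1)) //= Hj eqxx row_mxEl big1 ?addr0 //.
  by move=> i /negPf; rewrite -val_eqE /= -Hj => ->.
- rewrite [RHS]mxE; apply: big1 => i _; case: ifP => // /eqP Hij; rewrite mxE.
  case: splitP => [i1 Hi | i2 _]; last by rewrite mxE.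
  by move: (ltn_ord i1); rewrite -Hi Hij Hj ltnNge leq_addr.
Qed.

Section Blocks.
Variables (k m : nat) (P : 'M[F2]_(k, m)).

Lemma trunc_pad_mul_topblock_tr (R : 'M[F2]_(rk P, k - rk P)) (z : 'rV[F2]_m) :
  rsubmx (castmx (erefl, eqm P) z) = 0 -> trunc_pad k z *m (topblock R)^T = z.
Proof.
move=> z_low; apply: (can_inj (castmxK (erefl 1%N) (eqm P))).
have z_split : castmx (erefl, eqm P) z = row_mx (lsubmx (castmx (erefl, eqm P) z)) 0.
  by rewrite -z_low hsubmxK.
rewrite z_split /topblock trmx_cast /= (castmx_mul (erefl 1%N) (eqk P) (eqm P)).
rewrite castmxKV (trunc_pad_castmx (eqk P) (eqm P) z_split) tr_block_mx mul_row_block.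
by rewrite trmx1 !trmx0 mulmx1 !mul0mx !mulmx0 !addr0.
Qed.

Lemma topblock_mul_Pt (R : 'M[F2]_(rk P, k - rk P)) : topblock R *m Pt R = 0.
Proof.
rewrite /topblock /Pt -castmx_mul mul_block_col mul1mx mulmx1 F2mx_addrr.
by rewrite !mul0mx addr0 col_mx0 castmx_const.
Qed.

Lemma qblock_mul_Qt (Qr : 'M[F2]_(m - rk P, rk P)) : @qblock _ _ P Qr *m @Qt _ _ P Qr = 0.
Proof. by rewrite /qblock /Qt -castmx_mul castmx_id mul_row_col mul1mx mulmx1 F2mx_addrr. Qed.

End Blocks.

Lemma card_code n k (hn : (k + (n - k))%N = n) (P : 'M[F2]_(k, n - k)) :
  #|code hn P| = (2 ^ k)%N.
Proof.
rewrite card_imset ?card_mx ?card_Fp ?mul1n //.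
by move=> x1 x2 /(can_inj (castmxK _ _)) /eq_row_mx [].
Qed.

Section PhiBijection.
Variables (n k : nat) (hn : (k + (n - k))%N = n) (P : 'M[F2]_(k, n - k)).
Variables (EP : 'M[F2]_(n - k)) (PiP : 'M[F2]_k) (R : 'M[F2]_(rk P, k - rk P)).
Variables (EQ : 'M[F2]_(n - k - rk P)) (PiQ : 'M[F2]_(n - k))
          (Qr : 'M[F2]_(n - k - rk P, rk P)) (y : 'rV[F2]_(n - k)).
Hypotheses (EP_unit : EP \in unitmx) (PiP_perm : is_perm_mx PiP)
           (EP_P : EP *m P^T *m PiP = topblock R).
Hypotheses (EQ_unit : EQ \in unitmx) (PiQ_perm : is_perm_mx PiQ)
           (EQ_Q : EQ *m Qmat P EP *m PiQ = qblock Qr).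

Let e epri := err EP EQ PiQ Qr y epri.
Let Phi := Phi hn EP PiP R EQ PiQ Qr y.

Lemma err_mul_Qmat_tr epri : (y + e epri) *m (Qmat P EP)^T = 0.
Proof.
have Q_PiQ : Qmat P EP *m PiQ = invmx EQ *m qblock Qr by rewrite -EQ_Q -mulmxA mulKmx.
rewrite mulmxDl /e /err -mulmxA -trmx_mul Q_PiQ trmx_mul mulmxA mulmxDl.
rewrite -(mulmxA epri) -trmx_mul qblock_mul_Qt trmx0 mulmx0 add0r.
rewrite /e0 /qblock trmx_cast /= -castmx_mul castmx_id tr_row_mx mul_row_col.
rewrite trmx1 mulmx1 mul0mx addr0 -mulmxA -trmx_mul mulVmx // trmx1 mulmx1.
exact: F2mx_addrr.
Qed.

Lemma syndrome_rsubmx0 epri :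
  rsubmx (castmx (erefl, eqm P) ((e epri + y) *m EP^T)) = 0.
Proof.
rewrite (castmx_mul (erefl 1%N) (erefl _) (eqm P)) castmx_id.
have -> : castmx (erefl, eqm P) EP^T = (castmx (eqm P, erefl) EP)^T by rewrite trmx_cast.
rewrite -[castmx _ EP]vsubmxK tr_col_mx mul_mx_row row_mxKr addrC.
exact: err_mul_Qmat_tr.
Qed.

Lemma Phi_in_code p : Phi p \in code hn P.
Proof.
case: p => epri t; apply/imsetP; exists ((trunc_pad k ((e epri + y) *m EP^T)
  + t *m (Pt R)^T) *m PiP^T) => //.
congr (castmx _ (row_mx _ _)).
have EP_tr_unit : EP^T \in unitmx by rewrite unitmx_tr.
have P_EP : P *m EP^T = PiP *m (topblock R)^T.
  apply: trmx_inj; rewrite !trmx_mul !trmxK -EP_P -[RHS]mulmxA.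
  by rewrite mul_perm_mx_tr // mulmx1.
apply: (can_inj (mulmxK EP_tr_unit)).
rewrite -[_ *m P *m EP^T]mulmxA P_EP mulmxA -(mulmxA _ PiP^T PiP).
rewrite mul_tr_perm_mx // mulmx1 [RHS]mulmxDl -(mulmxA t) -trmx_mul topblock_mul_Pt.
rewrite trmx0 mulmx0 addr0 trunc_pad_mul_topblock_tr; first by rewrite addrC.
exact: syndrome_rsubmx0.
Qed.

Lemma Phi_inj : injective Phi.
Proof.
move=> [e1 t1] [e2 t2] /(can_inj (castmxK _ _)) /eq_row_mx /= [x_eq /addrI e_eq].
have e12 : e1 = e2.
  move/(congr1 (mulmx^~ PiQ)): e_eq; rewrite /err -!mulmxA mul_tr_perm_mx //.
  rewrite !mulmx1 => /addIr.
  by rewrite /Qt trmx_cast /= tr_col_mx trmx1 => /mul_row_mx1_inj.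
subst e2; congr pair.
move/(congr1 (mulmx^~ PiP)): x_eq; rewrite -!mulmxA mul_tr_perm_mx // !mulmx1.
by move=> /addrI; rewrite /Pt trmx_cast /= tr_col_mx trmx1 => /mul_row_mx1_inj.
Qed.

End PhiBijection.

Theorem mainTheorem5 (n k : nat) (hkn : (k < n)%N) (hk : (1 <= k)%N)
  (P : 'M[F2]_(k, n - k)) (y : 'rV[F2]_(n - k))
  (EP : 'M[F2]_(n - k)) (PiP : 'M[F2]_k) (R : 'M[F2]_(rk P, k - rk P))
  (EQ : 'M[F2]_(n - k - rk P)) (PiQ : 'M[F2]_(n - k))
  (Qr : 'M[F2]_(n - k - rk P, rk P)) :
  EP \in unitmx -> is_perm_mx PiP ->
  EP *m P^T *m PiP = topblock R ->
  EQ \in unitmx -> is_perm_mx PiQ ->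
  EQ *m Qmat P EP *m PiQ = qblock Qr ->
  (rk P = (n - k)%N -> PiQ = 1%:M) ->
  let hn := subnKC (ltnW hkn) in
  injective (Phi hn EP PiP R EQ PiQ Qr y) /\
  [set Phi hn EP PiP R EQ PiQ Qr y p | p : 'rV[F2]_(rk P) * 'rV[F2]_(k - rk P)]
    = code hn P /\
  #|code hn P| = (2 ^ k)%N.
Proof.
(* The convention Pi_Q = I when r_Q = 0 is not needed: any permutation works. *)
move=> EP_unit PiP_perm EP_P EQ_unit PiQ_perm EQ_Q _ hn.
have inj_Phi : injective (Phi hn EP PiP R EQ PiQ Qr y) by exact: Phi_inj.
split=> //; split; last exact: card_code.
apply/eqP; rewrite eqEcard; apply/andP; split.
  apply/subsetP => _ /imsetP [p _ ->].
  exact: Phi_in_code.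
rewrite card_code card_imset // card_prod !card_mx card_Fp // !mul1n -expnD.
by rewrite subnKC // rk_le_k.
Qed.
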